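(* Let $\mathcal C$ be the UM simplex $(n,k)$ code and consider the nodes of $c_{\rm total}=u_{\rm total}G_{\rm total}$. Then: (1) any erasure pattern with at most $2^{k-1}$ erasures allows for parallel $2$-repair; (2) any erasure pattern with at most $2^k-1$ erasures allows for parallel $3$-repair; (3) any erasure pattern with at most $2^k$ erasures allows for parallel $4$-repair; (4) any erasure pattern with at most $2^k+2^{k-1}-1=d_{free}-1$ erasures allows for parallel $5$-repair.
   Context: Let $k\ge2$ and let $G\in\mathbb F_2^{k\times(2^k-1)}$ be a generator matrix of the binary simplex code (columns are all distinct nonzero vectors of $\mathbb F_2^k$); set $n=2(2^k-1)$. The UM simplex $(n,k)$ code is the binary convolutional code with encoder $G(D)=G_0+G_1D$, $G_0=[G\ G]$, $G_1=[G\ 0]\in\mathbb F_2^{k\times n}$; its free distance is $3\cdot2^{k-1}$. For $u_{\rm total}=(u_0,\dots,u_s)\in\mathbb F_2^{(s+1)k}$, $c_{\rm total}=(c_0,\dots,c_{s+1})=u_{\rm total}G_{\rm total}$, where $G_{\rm total}\in\mathbb F_2^{(s+1)k\times(s+2)n}$ is the block matrix whose $i$-th block row ($i=0,\dots,s$) has $G_0$ in block column $i$, $G_1$ in block column $i+1$ and zeros elsewhere. Nodes are the coordinates of $c_{\rm total}$, corresponding to the columns $g_1,\dots,g_N$ of $G_{\rm total}$. An erasure pattern is a set of erased nodes; the others are live. A node $c_i$ is related to distinct nodes $c_{j_1},\dots,c_{j_\gamma}$ (all different from $c_i$) if $g_i=g_{j_1}+\dots+g_{j_\gamma}$. An erased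 node allows for $r$-repair if it is related to $\gamma\le r$ live nodes. An erasure pattern allows for parallel $r$-repair if each erased node allows for $r$-repair with respect to the original set of live nodes. *)

From mathcomp Require Import all_boot all_algebra.
Set Implicit Arguments. Unset Strict Implicit. Unset Printing Implicit Defensive.
Import GRing.Theory.
Local Open Scope ring_scope.

Notation F2 := 'F_2.

Definition um_n (k : nat) : nat := (2 * (2 ^ k - 1))%N.

(* G is a generator matrix of the binary simplex code: its 2^k-1 columns are
   pairwise distinct and nonzero (hence exactly all nonzero vectors of F_2^k). *)
Definition is_simplex_gen (k : nat) (G : 'M[F2]_(k, 2 ^ k - 1)) : Prop :=
  injective (fun j => col j G) /\ forall j, col j G != 0.

Definition UM_G0 k (G : 'M[F2]_(k, 2 ^ k - 1)) : 'M[F2]_(k, 2 ^ k - 1 + (2 ^ k - 1)) :=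
  row_mx G G.
Definition UM_G1 k (G : 'M[F2]_(k, 2 ^ k - 1)) : 'M[F2]_(k, 2 ^ k - 1 + (2 ^ k - 1)) :=
  row_mx G 0.

(* entry access by natural-number indices (0 outside the range) *)
Definition mx_at (R : nmodType) m p (A : 'M[R]_(m, p)) (a b : nat) : R :=
  match @insub _ (fun x => x < m)%N 'I_m a, @insub _ (fun x => x < p)%N 'I_p b with
  | Some i, Some j => A i j
  | _, _ => 0
  end.

(* G_total : block row i (i = 0..s) has G_0 in block column i, G_1 in block
   column i+1, zeros elsewhere. *)
Definition Gtotal k s (G : 'M[F2]_(k, 2 ^ k - 1)) :
  'M[F2]_(s.+1 * k, s.+2 * um_n k) :=
  \matrix_(r, c)
    let i := (r %/ k)%N in let a := (r %% k)%N in
    let j := (c %/ um_n k)%N in let b := (c %% um_n k)%N in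
    if j == i then mx_at (UM_G0 G) a b
    else if j == i.+1 then mx_at (UM_G1 G) a b
    else 0.

Definition related (F : nmodType) m N (M : 'M[F]_(m, N)) (i : 'I_N) (J : {set 'I_N}) : Prop :=
  [/\ (0 < #|J|)%N, i \notin J & col i M = \sum_(j in J) col j M].

Definition allows_repair (F : nmodType) m N (M : 'M[F]_(m, N)) (r : nat)
    (live : {set 'I_N}) (i : 'I_N) : Prop :=
  exists J : {set 'I_N}, [/\ related M i J, J \subset live & (#|J| <= r)%N].

Definition parallel_repair (F : nmodType) m N (M : 'M[F]_(m, N)) (r : nat)
    (E : {set 'I_N}) : Prop :=
  forall i, i \in E -> allows_repair M r (~: E) i.

(* Write a node as (j, h, b): block column j <= s+1, half h and offset b in the
   simplex code.  Its column is e_j(g_b) in the second half and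
   e_j(g_b) + e_(j-1)(g_b) in the first, where g_b is the b-th column of G and
   e_j places a vector in block row j.  As the g_b are all the nonzero vectors
   of F_2^k, each a <> v has a partner a' with g_a + g_a' = g_v; moreover block
   identities such as (j+1, first) + (j+1, second) = e_j write the column of
   (j, h, v) as the sum of one, two or four other nodes at offset v.  Combining
   these at offsets a and a' yields candidate repair sets of size at most r in
   which every node occurs at most once or twice, and counting shows that the
   other erasures cannot hit all of them.  Nodes in the last second-half block
   have zero columns and are repaired directly. *)

From mathcomp Require Import all_boot all_algebra.
From mathcomp Require Import zify.
Set Implicit Arguments. Unset Strict Implicit. Unset Printing Implicit Defensive.
Import GRing.Theory.

Section AvoidingCandidate.
Variables (I : finType) (E : {set I}).

Lemma size_le_sum_hits (L : seq {set I}) :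
  (forall J, J \in L -> ~~ (J \subset ~: E)) ->
  (size L <= \sum_(u in E) count (fun J : {set I} => u \in J) L)%N.
Proof.
elim: L => //= J L IH meetE; rewrite big_split /= -add1n leq_add //.
- have /subsetPn [u uJ] : ~~ (J \subset ~: E) by apply: meetE; rewrite mem_head.
  by rewrite inE negbK => uE; rewrite (bigD1 u) //= uJ.
- by apply: IH => J' J'L; apply: meetE; rewrite inE J'L orbT.
Qed.

(* Pigeonhole: the [#|E| - 1] erasures other than [c] meet at most
   [w * (#|E| - 1)] candidates. *)
Lemma exists_candidate_avoiding (L : seq {set I}) (c : I) (w : nat) :
  c \in E -> (forall J, J \in L -> c \notin J) ->
  (forall u, count (fun J : {set I} => u \in J) L <= w)%N ->
  (w * (#|E| - 1) < size L)%N ->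
  exists2 J, J \in L & J \subset ~: E.
Proof.
move=> cE cL hits_le sizeL; apply/hasP; apply: contraTT sizeL => /hasPn meetE.
rewrite -leqNgt (leq_trans (size_le_sum_hits meetE)) // (bigD1 c) //=.
have -> : count (fun J : {set I} => c \in J) L = 0%N.
  by apply/eqP; rewrite -leqn0 leqNgt -has_count; apply/hasPn => J /cL.
rewrite add0n (cardsD1 c) cE add1n subn1 /= mulnC -sum_nat_const.
rewrite (eq_bigl (fun u => u \in E :\ c)) ?leq_sum // => u.
by rewrite !inE andbC.
Qed.

End AvoidingCandidate.

Definition repair_set (R : nmodType) m N (M : 'M[R]_(m, N)) r c (J : {set 'I_N}) :=
  related M c J /\ (#|J| <= r)%N.

Definition repair_thresholds (R : nmodType) m N (M : 'M[R]_(m, N)) p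
    (E : {set 'I_N}) c :=
  [/\ (#|E| <= p)%N -> allows_repair M 2 (~: E) c,
      (#|E| <= 2 * p - 1)%N -> allows_repair M 3 (~: E) c,
      (#|E| <= 2 * p)%N -> allows_repair M 4 (~: E) c &
      (#|E| <= 3 * p - 1)%N -> allows_repair M 5 (~: E) c].

Local Open Scope ring_scope.

Section RepairSets.
Variables (R : nmodType) (m N : nat) (M : 'M[R]_(m, N)).

Lemma repair_set_leq r r' c J :
  (r <= r')%N -> repair_set M r c J -> repair_set M r' c J.
Proof. by move=> le_rr' [relJ leJr]; split; last exact: leq_trans le_rr'. Qed.

Lemma allows_repair_of_candidates r w (L : seq {set 'I_N}) (E : {set 'I_N}) c :
  c \in E -> (forall J, J \in L -> repair_set M r c J) ->
  (forall u, count (fun J : {set 'I_N} => u \in J) L <= w)%N ->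
  (w * (#|E| - 1) < size L)%N -> allows_repair M r (~: E) c.
Proof.
move=> cE repL hits sizeL.
have [|J JL JE] := exists_candidate_avoiding cE _ hits sizeL.
  by move=> J /repL [[]].
by have [relJ leJr] := repL J JL; exists J.
Qed.

End RepairSets.

(* The node [c] has column [f v] and is repaired from three families of node
   sets with column sums [f a]: [A a] (one node), [U a] (at most two) and
   [D a] (at most four).  As [f a + f (partner a) = f v], unions such as
   [A a :|: U (partner a)] repair [c]; the offset [off] and the layer (0, 1, 2
   for [A], [U], [D]) of a node bound the number of candidates containing it. *)
Section RepairFamilies.
Variables (R : nmodType) (m N : nat) (M : 'M[R]_(m, N)).
Variables (B : finType) (f : B -> 'cV[R]_m) (v : B) (partner : B -> B).
Variables (c : 'I_N) (off : 'I_N -> B) (layer : 'I_N -> nat).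
Hypothesis partner_sum : forall a, a != v -> f a + f (partner a) = f v.
Hypothesis partner_neq_v : forall a, a != v -> partner a != v.
Hypothesis partner_neq : forall a, a != v -> partner a != a.
Hypothesis partner_inj : {in [pred a | a != v] &, injective partner}.
Hypothesis off_c : off c = v.
Hypothesis layer_c : layer c = 0%N.
Hypothesis col_c : col c M = f v.

Definition layered (P : B -> {set 'I_N}) t :=
  forall a u, u \in P a -> off u = a /\ layer u = t.

Definition col_sums (P : B -> {set 'I_N}) :=
  forall a, \sum_(u in P a) col u M = f a.

Lemma repair_set_pair P Q tP tQ rP rQ a :
  layered P tP -> layered Q tQ -> (forall a, 0 < #|P a| <= rP)%N ->
  (forall a, #|Q a| <= rQ)%N -> col_sums P -> col_sums Q ->
  a != v -> repair_set M (rP + rQ) c (P a :|: Q (partner a)).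
Proof.
move=> lP lQ cardP cardQ sumP sumQ av.
have disjPQ : [disjoint P a & Q (partner a)].
  rewrite -setI_eq0; apply/eqP/setP => u; rewrite !inE.
  apply/negP => /andP [/lP [oa _] /lQ [oa' _]].
  by move: (partner_neq av); rewrite -oa' oa eqxx.
have /andP [P_gt0 P_le] := cardP a.
split; [split|].
- by rewrite (leq_trans P_gt0) // subset_leq_card // subsetUl.
- rewrite inE negb_or; apply/andP; split; apply/negP.
  + by move=> /lP [ea _]; move: av; rewrite -ea off_c eqxx.
  + by move=> /lQ [ea _]; move: (partner_neq_v av); rewrite -ea off_c eqxx.
- rewrite col_c (eq_bigl [predU P a & Q (partner a)]) => [|u]; last by rewrite !inE.
  by rewrite bigU //= sumP sumQ partner_sum.
- by rewrite cardsU (leq_trans (leq_subr _ _)) // leq_add.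
Qed.

Lemma repair_set_family P t r :
  layered P t -> t != 0%N -> (0 < #|P v| <= r)%N -> col_sums P ->
  repair_set M r c (P v).
Proof.
move=> lP t_neq0 /andP [P_gt0 P_le] sumP; split=> //; split=> //.
- by apply/negP => /lP [_ e]; move: t_neq0; rewrite -e layer_c.
- by rewrite sumP col_c.
Qed.

Definition other_offsets := enum [pred a | a != v].

Lemma mem_other_offsets a : (a \in other_offsets) = (a != v).
Proof. by rewrite mem_enum. Qed.

Lemma size_other_offsets : size other_offsets = #|B|.-1.
Proof. by rewrite -cardE -(cardC1 v); apply: eq_card => a; rewrite !inE. Qed.

Lemma count_layered_hits P t s u :
  layered P t -> uniq s -> {subset s <= [pred a | a != v]} ->
  (count (fun a => u \in P a) s <= (layer u == t) && (off u != v))%N.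
Proof.
move=> lP uniq_s s_v; case: (boolP (_ && _)) => [_ | not_hit].
- rewrite -size_filter (@uniq_leq_size _ _ [:: off u]) ?filter_uniq // => a.
  by rewrite mem_filter inE => /andP [/lP [-> _] _].
- rewrite leqn0 eqn0Ngt -has_count; apply/hasPn => a sa; apply/negP => /lP [ea eu].
  by have := s_v _ sa; rewrite inE => av; rewrite eu ea eqxx av in not_hit.
Qed.

Lemma count_pair_hits u P Q tP tQ :
  layered P tP -> layered Q tQ ->
  (count (fun J : {set 'I_N} => u \in J)
      [seq P a :|: Q (partner a) | a <- other_offsets]
    <= ((layer u == tP) && (off u != v)) + ((layer u == tQ) && (off u != v)))%N.
Proof.
move=> lP lQ.
have hitsP : (count (fun a => u \in P a) other_offsets
    <= (layer u == tP) && (off u != v))%N.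
  by apply: count_layered_hits (enum_uniq _) _ => // a; rewrite mem_other_offsets.
have hitsQ := count_layered_hits u lQ (s := [seq partner a | a <- other_offsets]).
rewrite count_map in hitsQ; rewrite count_map.
apply: leq_trans (leq_add hitsP (hitsQ _ _)).
- rewrite -count_predUI (leq_trans _ (leq_addr _ _)) //.
  by apply: sub_count => a; rewrite /= inE.
- rewrite map_inj_in_uniq ?enum_uniq // => a b; rewrite !mem_other_offsets.
  exact: partner_inj.
- by move=> _ /mapP [a av ->]; rewrite inE partner_neq_v // -mem_other_offsets.
Qed.

Lemma mem_family_v P t u :
  layered P t -> ((u \in P v) <= (layer u == t) && (off u == v))%N.
Proof. by move=> lP; case: (boolP (u \in P v)) => // /lP [-> ->]; rewrite !eqxx. Qed.

Section Families.
Variables (A U D : B -> {set 'I_N}) (p : nat).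
Hypotheses (lA : layered A 0) (lU : layered U 1) (lD : layered D 2).
Hypotheses (sA : col_sums A) (sU : col_sums U) (sD : col_sums D).
Hypothesis cardA : forall a, (0 < #|A a| <= 1)%N.
Hypothesis cardU : forall a, (0 < #|U a| <= 2)%N.
Hypothesis cardD : forall a, (0 < #|D a| <= 4)%N.
Hypothesis p_ge2 : (2 <= p)%N.
Hypothesis cardB : #|B| = (2 * p - 1)%N.

Let card_le (P : B -> {set 'I_N}) r : (forall a, 0 < #|P a| <= r)%N -> forall a, (#|P a| <= r)%N.
Proof. by move=> cardP a; case/andP: (cardP a). Qed.

Let pairs_repair P Q tP tQ rP rQ :
  layered P tP -> layered Q tQ -> (forall a, 0 < #|P a| <= rP)%N ->
  (forall a, 0 < #|Q a| <= rQ)%N -> col_sums P -> col_sums Q ->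
  forall J, J \in [seq P a :|: Q (partner a) | a <- other_offsets] ->
  repair_set M (rP + rQ) c J.
Proof.
move=> lP lQ cardP cardQ sP sQ _ /mapP [a a_in ->].
by apply: (repair_set_pair lP lQ cardP (card_le cardQ) sP sQ); rewrite -mem_other_offsets.
Qed.

Let Uv : repair_set M 2 c (U v). Proof. exact: repair_set_family lU _ (cardU v) sU. Qed.
Let Dv : repair_set M 4 c (D v). Proof. exact: repair_set_family lD _ (cardD v) sD. Qed.

Let size_v : size other_offsets = (2 * p - 2)%N.
Proof. by rewrite size_other_offsets cardB; lia. Qed.

Variable E : {set 'I_N}.
Hypothesis cE : c \in E.

Lemma allows_repair2_of_families : (#|E| <= p)%N -> allows_repair M 2 (~: E) c.
Proof.
move=> small_E; apply: (@allows_repair_of_candidates _ _ _ _ 2 2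
  ([seq A a :|: A (partner a) | a <- other_offsets] ++ [:: U v; U v])) => //.
- move=> J; rewrite mem_cat => /orP [/(pairs_repair lA lA cardA cardA sA sA) //|].
  by rewrite !inE => /orP [] /eqP ->; apply: Uv.
- move=> u; rewrite count_cat /=.
  have := count_pair_hits u lA lA; have := mem_family_v u lU.
  by case: (off u == v); case: (layer u) => [|[|[|?]]] /=; lia.
- by move: small_E; rewrite size_cat size_map size_v /=; lia.
Qed.

Lemma allows_repair3_of_families : (#|E| <= 2 * p - 1)%N -> allows_repair M 3 (~: E) c.
Proof.
move=> small_E; apply: (@allows_repair_of_candidates _ _ _ _ 3 1
  ([seq A a :|: U (partner a) | a <- other_offsets] ++ [:: U v])) => //.
- move=> J; rewrite mem_cat => /orP [/(pairs_repair lA lU cardA cardU sA sU) //|].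
  by rewrite !inE => /eqP ->; apply: repair_set_leq Uv.
- move=> u; rewrite count_cat /=.
  have := count_pair_hits u lA lU; have := mem_family_v u lU.
  by case: (off u == v); case: (layer u) => [|[|[|?]]] /=; lia.
- by move: small_E; rewrite size_cat size_map size_v /=; lia.
Qed.

Lemma allows_repair4_of_families : (#|E| <= 2 * p)%N -> allows_repair M 4 (~: E) c.
Proof.
move=> small_E; apply: (@allows_repair_of_candidates _ _ _ _ 4 1
  ([seq A a :|: U (partner a) | a <- other_offsets] ++ [:: U v; D v])) => //.
- move=> J; rewrite mem_cat => /orP [/(pairs_repair lA lU cardA cardU sA sU) rep|].
    exact: repair_set_leq rep.
  by rewrite !inE => /orP [] /eqP -> //; apply: repair_set_leq Uv.
- move=> u; rewrite count_cat /=.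
  have := count_pair_hits u lA lU; have := mem_family_v u lU; have := mem_family_v u lD.
  by case: (off u == v); case: (layer u) => [|[|[|?]]] /=; lia.
- by move: small_E; rewrite size_cat size_map size_v /=; lia.
Qed.

(* Listing the pairs [A a :|: D (partner a)] twice doubles their number while
   no node occurs in more than two candidates. *)
Lemma allows_repair5_of_families : (#|E| <= 3 * p - 1)%N -> allows_repair M 5 (~: E) c.
Proof.
move=> small_E; pose AD := [seq A a :|: D (partner a) | a <- other_offsets].
apply: (@allows_repair_of_candidates _ _ _ _ 5 2 (AD ++ AD
  ++ [seq U a :|: U (partner a) | a <- other_offsets] ++ [:: U v; U v; D v; D v])) => //.
- have ADrep := pairs_repair lA lD cardA cardD sA sD.
  move=> J; rewrite !mem_cat => /or4P [/ADrep //|/ADrep //||].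
    by move=> /(pairs_repair lU lU cardU cardU sU sU) rep; apply: repair_set_leq rep.
  by rewrite !inE => /or4P [] /eqP ->; [apply: repair_set_leq Uv|apply: repair_set_leq Uv
    |apply: repair_set_leq Dv|apply: repair_set_leq Dv].
- move=> u; rewrite /AD !count_cat /=.
  have := count_pair_hits u lA lD; have := count_pair_hits u lU lU.
  have := mem_family_v u lU; have := mem_family_v u lD.
  by case: (off u == v); case: (layer u) => [|[|[|?]]] /=; lia.
- by move: small_E; rewrite !size_cat !size_map size_v /=; lia.
Qed.

Lemma repair_thresholds_of_families : repair_thresholds M p E c.
Proof.
split; [exact: allows_repair2_of_families | exact: allows_repair3_of_families
  | exact: allows_repair4_of_families | exact: allows_repair5_of_families].
Qed.

End Families.

End RepairFamilies.

Lemma F2mx_addxx m n (x : 'M[F2]_(m, n)) : x + x = 0.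
Proof. by apply/matrixP => i j; rewrite !mxE (addrr_pchar2 (pchar_Fp _)). Qed.

Lemma mx_atE (R : nmodType) p q (A : 'M[R]_(p, q)) a b (ha : (a < p)%N) (hb : (b < q)%N) :
  mx_at A a b = A (Ordinal ha) (Ordinal hb).
Proof. by rewrite /mx_at (insubT (fun x => x < p)%N ha) (insubT (fun x => x < q)%N hb). Qed.

(* A node of [Gtotal s G] has a block column [j <= s.+1], a half [h] ([false]
   for the copy of [G] present in both [G0] and [G1], [true] for the copy
   present in [G0] only) and an offset [b] in the simplex code. *)
Section UMNodes.
Variables k s : nat.
Local Notation m := (2 ^ k - 1)%N.
Local Notation n := (um_n k).
Local Notation N := (s.+2 * um_n k)%N.

Lemma um_nE : n = (m + m)%N.
Proof. by rewrite /um_n; lia. Qed.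

Lemma node_subproof (j : 'I_s.+2) (h : bool) (b : 'I_m) : (j * n + (h * m + b) < N)%N.
Proof.
have lt_j := ltn_ord j; have lt_b := ltn_ord b; rewrite um_nE.
have : (h * m + b < m + m)%N by case: h; lia.
nia.
Qed.

(* Only meaningful for [j <= s.+1]: [inord] wraps larger [j] around. *)
Definition node (j : nat) (h : bool) (b : 'I_m) : 'I_N :=
  Ordinal (node_subproof (inord j) h b).

Definition node_half (u : 'I_N) := (m <= u %% n)%N.
Definition node_offset (u : 'I_N) := (u %% n - node_half u * m)%N.

Section Coordinates.
Variables (j : nat) (h : bool) (b : 'I_m).
Hypothesis le_j : (j <= s.+1)%N.

Lemma nodeE : node j h b = (j * n + (h * m + b))%N :> nat.
Proof. by rewrite /node /= inordK. Qed.

Lemma node_mod : (node j h b %% n = h * m + b)%N.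
Proof.
by rewrite nodeE modnMDl modn_small // um_nE; have lt_b := ltn_ord b; case: h; lia.
Qed.

Lemma node_div : (node j h b %/ n)%N = j.
Proof.
have lt_b := ltn_ord b.
by rewrite nodeE divnMDl ?divn_small ?addn0 // um_nE; case: h; lia.
Qed.

Lemma node_halfE : node_half (node j h b) = h.
Proof.
by rewrite /node_half node_mod; have lt_b := ltn_ord b; case: h; apply/idP/idP; lia.
Qed.

Lemma node_offsetE : node_offset (node j h b) = b.
Proof. by rewrite /node_offset node_halfE node_mod addKn. Qed.

End Coordinates.

Lemma node_inj j h b j' h' b' : (j <= s.+1)%N -> (j' <= s.+1)%N ->
  node j h b = node j' h' b' -> [/\ j = j', h = h' & b = b'].
Proof.
move=> le_j le_j' e; split.
- by rewrite -(@node_div j h b le_j) e node_div.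
- by rewrite -(@node_halfE j h b le_j) e node_halfE.
- by apply/val_inj; rewrite /= -(@node_offsetE j h b le_j) e node_offsetE.
Qed.

Lemma node_surj (u : 'I_N) : exists j h b, (j <= s.+1)%N /\ u = node j h b.
Proof.
have lt_u := ltn_ord u.
have n_gt0 : (0 < n)%N.
  by move: (nat_of_ord u) lt_u => x; rewrite lt0n; apply: contraTneq => ->; rewrite muln0.
have lt_mod : (u %% n < m + m)%N by rewrite -um_nE ltn_mod.
have le_j : (u %/ n <= s.+1)%N by rewrite -ltnS ltn_divLR.
have [lt_m|ge_m] := ltnP (u %% n) m.
- exists (u %/ n)%N, false, (Ordinal lt_m); split => //.
  by apply/val_inj; rewrite /= inordK //= add0n {1}(divn_eq u n).
- have lt_b : (u %% n - m < m)%N by lia.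
  exists (u %/ n)%N, true, (Ordinal lt_b); split => //.
  by apply/val_inj; rewrite /= inordK //= mul1n subnKC // {1}(divn_eq u n).
Qed.

End UMNodes.

Arguments node : simpl never.

Lemma mx_atD (R : nmodType) p q (A A' : 'M[R]_(p, q)) a b :
  mx_at (A + A') a b = mx_at A a b + mx_at A' a b.
Proof.
rewrite /mx_at; case: (@insub _ (fun x => x < p)%N 'I_p a) => [i|]; last by rewrite addr0.
by case: (@insub _ (fun x => x < q)%N 'I_q b) => [j|]; rewrite ?mxE ?addr0.
Qed.

Section UMColumns.
Variables (k s : nat) (G : 'M[F2]_(k, 2 ^ k - 1)).
Local Notation m := (2 ^ k - 1)%N.
Local Notation N := (s.+2 * um_n k)%N.
Local Notation node := (@node k s).

Definition embed (i : nat) (x : 'cV[F2]_k) : 'cV[F2]_(s.+1 * k) :=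
  \col_r (if (r %/ k == i)%N then mx_at x (r %% k) 0 else 0).

Definition embed_prev (j : nat) (x : 'cV[F2]_k) : 'cV[F2]_(s.+1 * k) :=
  if j is i.+1 then embed i x else 0.

Definition node_col (j : nat) (h : bool) (x : 'cV[F2]_k) : 'cV[F2]_(s.+1 * k) :=
  if h then embed j x else embed j x + embed_prev j x.

Lemma embedD i x y : embed i (x + y) = embed i x + embed i y.
Proof. by apply/matrixP => r z; rewrite !mxE; case: ifP; rewrite ?mx_atD ?addr0. Qed.

Lemma node_colD j h x y : node_col j h (x + y) = node_col j h x + node_col j h y.
Proof. by case: h; case: j => [|j]; rewrite /node_col /= ?embedD ?addr0 // addrACA. Qed.

Lemma node_col_halves j x : node_col j.+1 false x + node_col j.+1 true x = embed j x.
Proof. by rewrite /node_col /= addrAC F2mx_addxx add0r. Qed.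

Lemma node_col_adjacent j x : node_col j.+1 false x + node_col j true x = embed j.+1 x.
Proof. by rewrite /node_col /= -addrA F2mx_addxx addr0. Qed.

Lemma embed_out i x : (s < i)%N -> embed i x = 0.
Proof.
move=> lt_si; apply/matrixP => r z; rewrite !mxE; case: ifP => // /eqP e.
have lt_r := ltn_ord r.
have k_gt0 : (0 < k)%N.
  by move: (nat_of_ord r) lt_r => x'; rewrite lt0n; apply: contraTneq => ->; rewrite muln0.
by move: lt_r; rewrite -ltn_divLR // e ltnNge lt_si.
Qed.

Lemma col_node j h b : (j <= s.+1)%N -> col (node j h b) (Gtotal s G) = node_col j h (col b G).
Proof.
move=> le_j; apply/matrixP => r z; rewrite (ord1 z).
have lt_r := ltn_ord r.
have k_gt0 : (0 < k)%N.
  by move: (nat_of_ord r) lt_r => x; rewrite lt0n; apply: contraTneq => ->; rewrite muln0.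
have lt_a : (r %% k < k)%N by rewrite ltn_mod.
have lt_b := ltn_ord b.
have lt_hb : (h * m + b < m + m)%N by case: h; lia.
have lt_0 : (0 < 1)%N by [].
rewrite !mxE /= (node_div h b le_j) (node_mod h b le_j) /UM_G0 /UM_G1 !(mx_atE _ lt_a lt_hb).
case: h lt_hb => lt_hb /=.
- have -> : Ordinal lt_hb = rshift m b by apply/val_inj => /=; lia.
  rewrite !row_mxEr !mxE (mx_atE _ lt_a lt_0) !mxE eq_sym.
  by case: ifP => // _; case: ifP.
- have -> : Ordinal lt_hb = lshift m b by apply/val_inj.
  rewrite !row_mxEl !mxE (mx_atE _ lt_a lt_0) !mxE eq_sym.
  case: j le_j => [|j] le_j /=; rewrite ?mxE ?addr0.
  + by case: eqP => //; rewrite ?(mx_atE _ lt_a lt_0).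
  + rewrite (mx_atE _ lt_a lt_0) eqSS.
    case: (eqVneq (r %/ k)%N j.+1) => [->|ne].
      by rewrite (gtn_eqF (ltnSn j)) addr0.
    by rewrite add0r eq_sym; case: eqP => // _; rewrite mxE.
Qed.

End UMColumns.

Section SimplexPartner.
Variables (k : nat) (G : 'M[F2]_(k, 2 ^ k - 1)).
Hypothesis simplexG : is_simplex_gen G.
Local Notation m := (2 ^ k - 1)%N.
Local Notation g b := (col b G).

Lemma simplex_col_inj : injective (fun b : 'I_m => g b).
Proof. by case: simplexG. Qed.

Lemma simplex_col_neq0 b : g b != 0.
Proof. by case: simplexG. Qed.

(* By cardinality: [2 ^ k - 1] distinct nonzero columns. *)
Lemma simplex_col_surj (x : 'cV[F2]_k) : x != 0 -> exists b, g b = x.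
Proof.
move=> x_neq0.
have im_g : [set g b | b in 'I_m] = [set~ 0].
  apply/eqP; rewrite eqEcard; apply/andP; split.
    by apply/subsetP => _ /imsetP [b _ ->]; rewrite !inE simplex_col_neq0.
  rewrite card_imset; last exact: simplex_col_inj.
  by rewrite cardsC1 card_ord card_mx card_Fp // muln1 subn1.
have : x \in [set~ 0] by rewrite !inE.
by rewrite -im_g => /imsetP [b _ ->]; exists b.
Qed.

(* The default [a] is only reached for [a = v]. *)
Definition partner (v a : 'I_m) : 'I_m := odflt a [pick c | g c == g a + g v].

Section Partner.
Variables (v a : 'I_m).
Hypothesis a_neq_v : a != v.

Lemma col_partner : g (partner v a) = g a + g v.
Proof.
rewrite /partner; case: pickP => [c /eqP //| no_c].
have neq0 : g a + g v != 0.
  apply: contra a_neq_v => /eqP e; apply/eqP/simplex_col_inj.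
  by rewrite /= -[g a]addr0 -(F2mx_addxx (g v)) addrA e add0r.
by have [c gc] := simplex_col_surj neq0; move: (no_c c); rewrite gc eqxx.
Qed.

Lemma col_partner_sum : g a + g (partner v a) = g v.
Proof. by rewrite col_partner addrA F2mx_addxx add0r. Qed.

Lemma partner_neq_v : partner v a != v.
Proof.
apply/eqP => e; have := col_partner; rewrite e -{1}[g v]add0r => /addIr /eqP.
by rewrite eq_sym (negbTE (simplex_col_neq0 a)).
Qed.

Lemma partner_neq : partner v a != a.
Proof.
apply/eqP => e; have := col_partner; rewrite e -{1}[g a]addr0 => /addrI /eqP.
by rewrite eq_sym (negbTE (simplex_col_neq0 v)).
Qed.

End Partner.

Lemma partner_inj v : {in [pred a | a != v] &, injective (partner v)}.
Proof.
move=> a a' a_v a'_v e; apply: simplex_col_inj => /=.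
by have := col_partner a_v; rewrite e col_partner // => /addIr.
Qed.

End SimplexPartner.

Section UMRepair.
Variables (k s : nat) (G : 'M[F2]_(k, 2 ^ k - 1)).
Hypothesis simplexG : is_simplex_gen G.
Local Notation m := (2 ^ k - 1)%N.
Local Notation N := (s.+2 * um_n k)%N.
Local Notation M := (Gtotal s G).
Local Notation node := (@node k s).
Local Notation node_col := (@node_col k s).

Definition node_key (u : 'I_N) := ((u %/ um_n k)%N, node_half u).

Lemma node_keyE j h b : (j <= s.+1)%N -> node_key (node j h b) = (j, h).
Proof. by move=> le_j; rewrite /node_key node_div ?node_halfE. Qed.

Definition key_bounded (K : seq (nat * bool)) := all (fun q => q.1 <= s.+1)%N K.

Definition node_set (K : seq (nat * bool)) (a : 'I_m) : {set 'I_N} :=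
  [set u in [seq node q.1 q.2 a | q <- K]].

Section NodeSet.
Variables (K : seq (nat * bool)) (a : 'I_m).
Hypotheses (boundedK : key_bounded K) (uniqK : uniq K).

Lemma uniq_node_seq : uniq [seq node q.1 q.2 a | q <- K].
Proof.
rewrite map_inj_in_uniq // => -[j h] [j2 h2] /(allP boundedK) /= le_j /(allP boundedK) /= le_j2 e.
by have [-> -> _] := node_inj le_j le_j2 e.
Qed.

Lemma card_node_set : #|node_set K a| = size K.
Proof. by rewrite cardsE (card_uniqP uniq_node_seq) size_map. Qed.

Lemma sum_node_set :
  \sum_(u in node_set K a) col u M = \sum_(q <- K) node_col q.1 q.2 (col a G).
Proof.
rewrite (eq_bigl (mem [seq node q.1 q.2 a | q <- K])) => [|u]; last by rewrite inE.
rewrite -big_uniq ?uniq_node_seq // big_map; apply: eq_big_seq => -[j h] /(allP boundedK) /= le_j.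
exact: col_node.
Qed.

End NodeSet.

Lemma mem_node_set K a u :
  key_bounded K -> u \in node_set K a -> node_key u \in K /\ node_offset u = a.
Proof.
move=> boundedK; rewrite inE => /mapP [[j h] qK ->].
by have le_j := allP boundedK _ qK; rewrite node_keyE ?node_offsetE.
Qed.

Lemma node_set_layered (v : 'I_m) (layer : nat * bool -> nat) K t :
  key_bounded K -> {in K, forall q, layer q = t} ->
  layered (fun u => insubd v (node_offset u)) (fun u => layer (node_key u)) (node_set K) t.
Proof.
move=> boundedK layerK a u /(mem_node_set boundedK) [uK off_u]; split; last exact: layerK.
by apply/val_inj; rewrite /= off_u insubdK // unfold_in ltn_ord.
Qed.

Lemma count_node_set_hits K (sa : seq 'I_m) u : key_bounded K -> uniq sa ->
  (count (fun J : {set 'I_N} => u \in J) [seq node_set K a | a <- sa]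
    <= (node_key u \in K))%N.
Proof.
move=> boundedK uniq_sa; rewrite count_map.
case: (boolP (node_key u \in K)) => [_|notK]; last first.
  rewrite leqn0 eqn0Ngt -has_count; apply/hasPn => a _; apply/negP.
  by move=> /(mem_node_set boundedK) [uK _]; rewrite uK in notK.
apply: (@leq_trans (count (fun a : 'I_m => nat_of_ord a == node_offset u) sa)).
  by apply: sub_count => a /(mem_node_set boundedK) [_ ->].
rewrite (eq_count (a2 := preim val (pred1 (node_offset u)))) // -count_map.
by rewrite count_uniq_mem ?leq_b1 // (map_inj_uniq val_inj).
Qed.

Lemma repair_set_node_set c K a r : key_bounded K -> uniq K -> (0 < size K <= r)%N ->
  c \notin node_set K a -> col c M = \sum_(q <- K) node_col q.1 q.2 (col a G) ->
  repair_set M r c (node_set K a).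
Proof.
move=> bK uK /andP [K_gt0 K_le] cK col_c.
by do 2?split; rewrite ?card_node_set ?sum_node_set.
Qed.

(* The families of [repair_thresholds_of_families] are the node sets of the
   keys [[:: q0]], [KU] and [KD] at every offset, paired by [partner v]. *)
Lemma repair_thresholds_of_keys (q0 : nat * bool) (KU KD : seq (nat * bool))
    (v : 'I_m) (E : {set 'I_N}) p :
  key_bounded (q0 :: KU ++ KD) -> uniq (q0 :: KU ++ KD) ->
  (0 < size KU <= 2)%N -> (0 < size KD <= 4)%N ->
  (forall x, \sum_(q <- KU) node_col q.1 q.2 x = node_col q0.1 q0.2 x) ->
  (forall x, \sum_(q <- KD) node_col q.1 q.2 x = node_col q0.1 q0.2 x) ->
  (2 <= p)%N -> m = (2 * p - 1)%N -> node q0.1 q0.2 v \in E ->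
  repair_thresholds M p E (node q0.1 q0.2 v).
Proof.
case: q0 => j0 h0 /=; rewrite /key_bounded /= all_cat cat_uniq mem_cat negb_or.
move=> /and3P [le_j0 bU bD] /andP [/andP [q0U q0D] /and3P [uU UD uD]].
move=> sizeU sizeD sumU sumD p_ge2 m_p cE.
pose layer q := if q == (j0, h0) then 0%N else if q \in KU then 1%N else 2%N.
have bA : key_bounded [:: (j0, h0)] by rewrite /key_bounded /= le_j0.
have sums K : key_bounded K -> uniq K ->
    (forall x, \sum_(q <- K) node_col q.1 q.2 x = node_col j0 h0 x) ->
    col_sums M (fun a => node_col j0 h0 (col a G)) (node_set K).
  by move=> bK uK sumK a; rewrite sum_node_set.
have card K : key_bounded K -> uniq K -> forall a, #|node_set K a| = size K.
  by move=> bK uK a; rewrite card_node_set.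
apply: (@repair_thresholds_of_families _ _ _ _ _
    (fun a => node_col j0 h0 (col a G)) v (partner G v) _
    (fun u => insubd v (node_offset u)) (fun u => layer (node_key u))
    _ _ _ _ _ _ _ (node_set [:: (j0, h0)]) (node_set KU) (node_set KD)).
- by move=> a av; rewrite -node_colD col_partner_sum.
- exact: partner_neq_v.
- exact: partner_neq.
- exact: partner_inj.
- by apply/val_inj; rewrite /= node_offsetE // insubdK // unfold_in ltn_ord.
- by rewrite node_keyE // /layer eqxx.
- exact: col_node.
- by apply: node_set_layered => // q; rewrite inE => /eqP ->; rewrite /layer eqxx.
- apply: node_set_layered => // q qU; rewrite /layer qU.
  by case: eqP => // eq; move: q0U; rewrite -eq qU.
- apply: node_set_layered => // q qD; rewrite /layer.
  case: eqP => [eq|_]; first by move: q0D; rewrite -eq qD.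
  by case: ifP => // qU; move/hasPn: UD => /(_ q qD); rewrite qU.
- by apply: sums => // x; rewrite big_seq1.
- exact: sums.
- exact: sums.
- by move=> a; rewrite card.
- by move=> a; rewrite card.
- by move=> a; rewrite card.
- done.
- by rewrite card_ord.
- done.
Qed.

Ltac solve_keys := rewrite /key_bounded /= ?inE ?xpair_eqE /=; lia.

Lemma repair_thresholds_second_half j v (E : {set 'I_N}) p :
  (j <= s)%N -> (2 <= p)%N -> m = (2 * p - 1)%N -> node j true v \in E ->
  repair_thresholds M p E (node j true v).
Proof.
move=> le_js p_ge2 m_p cE.
have sumU x : \sum_(q <- [:: (j.+1, false); (j.+1, true)]) node_col q.1 q.2 x = embed s j x.
  by rewrite big_cons big_seq1 node_col_halves.
case: j le_js cE sumU => [|j] le_js cE sumU.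
- have sumD x : \sum_(q <- [:: (0, false)]) node_col q.1 q.2 x = embed s 0 x.
    by rewrite big_seq1 /node_col /= addr0.
  by apply: (repair_thresholds_of_keys (q0 := (0, true)) _ _ _ _ sumU sumD) => //;
    solve_keys.
- have sumD x : \sum_(q <- [:: (j.+1, false); (j, true)]) node_col q.1 q.2 x = embed s j.+1 x.
    by rewrite big_cons big_seq1 node_col_adjacent.
  by apply: (repair_thresholds_of_keys (q0 := (j.+1, true)) _ _ _ _ sumU sumD) => //;
    solve_keys.
Qed.

Lemma repair_thresholds_first_half j v (E : {set 'I_N}) p :
  (j <= s.+1)%N -> (2 <= p)%N -> m = (2 * p - 1)%N -> node j false v \in E ->
  repair_thresholds M p E (node j false v).
Proof.
move=> le_j p_ge2 m_p cE.
case: j le_j cE => [|[|i]] le_j cE.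
- have sumU x : \sum_(q <- [:: (0, true)]) node_col q.1 q.2 x = node_col 0 false x.
    by rewrite big_seq1 /node_col /= addr0.
  have sumD x : \sum_(q <- [:: (1, false); (1, true)]) node_col q.1 q.2 x = node_col 0 false x.
    by rewrite big_cons big_seq1 node_col_halves /node_col /= addr0.
  by apply: (repair_thresholds_of_keys (q0 := (0, false)) _ _ _ _ sumU sumD) => //;
    solve_keys.
- have sumU x : \sum_(q <- [:: (1, true); (0, true)]) node_col q.1 q.2 x = node_col 1 false x.
    by rewrite big_cons big_seq1.
  have [le_1s|gt_1s] := leqP 1 s.
  + have sumD x : \sum_(q <- [:: (2, false); (2, true); (0, false)]) node_col q.1 q.2 x
        = node_col 1 false x.
      by rewrite !big_cons big_nil addr0 addrA node_col_halves /node_col /= addr0.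
    by apply: (repair_thresholds_of_keys (q0 := (1, false)) _ _ _ _ sumU sumD) => //;
      solve_keys.
  + have sumD x : \sum_(q <- [:: (0, false)]) node_col q.1 q.2 x = node_col 1 false x.
      by rewrite big_seq1 /node_col /= (embed_out x gt_1s) add0r addr0.
    by apply: (repair_thresholds_of_keys (q0 := (1, false)) _ _ _ _ sumU sumD) => //;
      solve_keys.
- have sumU x : \sum_(q <- [:: (i.+2, true); (i.+1, true)]) node_col q.1 q.2 x
      = node_col i.+2 false x.
    by rewrite big_cons big_seq1.
  have [le_is|gt_is] := leqP i.+2 s.
  + have sumD x : \sum_(q <- [:: (i.+3, false); (i.+3, true); (i.+1, false); (i, true)])
          node_col q.1 q.2 x = node_col i.+2 false x.
      by rewrite !big_cons big_nil addr0 addrA node_col_halves node_col_adjacent.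
    by apply: (repair_thresholds_of_keys (q0 := (i.+2, false)) _ _ _ _ sumU sumD) => //;
      solve_keys.
  + have sumD x : \sum_(q <- [:: (i.+1, false); (i, true)]) node_col q.1 q.2 x
        = node_col i.+2 false x.
      by rewrite big_cons big_seq1 node_col_adjacent /node_col /= (embed_out x gt_is) add0r.
    by apply: (repair_thresholds_of_keys (q0 := (i.+2, false)) _ _ _ _ sumU sumD) => //;
      solve_keys.
Qed.

(* The last node of the second half has a zero column: it is repaired by any
   other such node, or by the two first-block nodes sharing an offset. *)
Lemma allows_repair_last_block v r (E : {set 'I_N}) :
  (2 <= r)%N -> (#|E| < 2 * m)%N -> node s.+1 true v \in E ->
  allows_repair M r (~: E) (node s.+1 true v).
Proof.
move=> r_ge2 small_E cE; set c := node s.+1 true v.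
have col_c : col c M = 0 by rewrite col_node // /node_col embed_out.
pose K1 := [:: (s.+1, true)]; pose K2 := [:: (0%N, false); (0%N, true)].
have bK1 : key_bounded K1 by rewrite /key_bounded /= leqnn.
have bK2 : key_bounded K2 by [].
apply: (@allows_repair_of_candidates _ _ _ _ r 1 ([seq node_set K1 a | a <- enum [pred a | a != v]]
    ++ [seq node_set K2 a | a <- enum 'I_m])) => //.
- move=> J; rewrite mem_cat => /orP [] /mapP [a a_in ->]; apply: repair_set_node_set => //.
  + by rewrite /= (leq_trans _ r_ge2).
  + apply/negP => /(mem_node_set bK1) [_]; rewrite node_offsetE // => /val_inj e.
    by move: a_in; rewrite mem_enum inE e eqxx.
  + by rewrite col_c big_seq1 /node_col /= embed_out.
  + by apply/negP => /(mem_node_set bK2) []; rewrite node_keyE.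
  + by rewrite col_c big_cons big_seq1 /node_col /= addr0 F2mx_addxx.
- move=> u; rewrite count_cat.
  apply: leq_trans (leq_add (count_node_set_hits u bK1 (enum_uniq [pred a | a != v]))
    (count_node_set_hits u bK2 (enum_uniq 'I_m))) _.
  by case: (node_key u) => j h; rewrite !inE !xpair_eqE; case: h; lia.
- by rewrite size_cat !size_map -enumT size_enum_ord -cardE (cardC1 v) card_ord; lia.
Qed.

Lemma repair_thresholds_node u (E : {set 'I_N}) p :
  (2 <= p)%N -> m = (2 * p - 1)%N -> u \in E -> repair_thresholds M p E u.
Proof.
move=> p_ge2 m_p uE; have [j [h [b [le_j def_u]]]] := node_surj u; subst u.
case: h uE => uE; last exact: repair_thresholds_first_half.
have [le_js|gt_js] := leqP j s; first exact: repair_thresholds_second_half.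
have def_j : j = s.+1 by lia.
by subst j; split=> small_E; apply: allows_repair_last_block => //; lia.
Qed.

End UMRepair.

Lemma pow2_half k : (2 <= k)%N -> (2 ^ k = 2 * 2 ^ k.-1)%N /\ (2 <= 2 ^ k.-1)%N.
Proof.
case: k => [|[|k]] // _; rewrite expnS; split=> //.
by rewrite /= expnS leq_pmulr // expn_gt0.
Qed.

Theorem theorem5p4 (k : nat) (hk : (2 <= k)%N) (s : nat)
    (G : 'M['F_2]_(k, 2 ^ k - 1)) (hG : is_simplex_gen G)
    (E : {set 'I_(s.+2 * um_n k)}) :
    [/\ (#|E| <= 2 ^ k.-1)%N -> parallel_repair (Gtotal s G) 2 E,
        (#|E| <= 2 ^ k - 1)%N -> parallel_repair (Gtotal s G) 3 E,
        (#|E| <= 2 ^ k)%N -> parallel_repair (Gtotal s G) 4 E &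
        (#|E| <= 2 ^ k + 2 ^ k.-1 - 1)%N -> parallel_repair (Gtotal s G) 5 E].
Proof.
have [pow_k p_ge2] := pow2_half hk.
have m_p : (2 ^ k - 1 = 2 * 2 ^ k.-1 - 1)%N by rewrite pow_k.
rewrite pow_k; split=> small_E u uE;
  have [rep2 rep3 rep4 rep5] := repair_thresholds_node hG p_ge2 m_p uE.
- exact: rep2.
- exact: rep3.
- exact: rep4.
- by apply: rep5; lia.
Qed.
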